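(* Let $\mathcal{A}$ be a unital algebra over a field $F$ with $\operatorname{char}(F)\neq2$ such that $\mathcal{A}$ is generated (as an algebra) by its idempotents, i.e. $\mathcal{A}=R(\mathcal{A})$. Then $\operatorname{JCent}(\mathcal{A})=\operatorname{Cent}(\mathcal{A})$.
   Context: $R(\mathcal{A})$ denotes the subalgebra of $\mathcal{A}$ generated by all idempotents of $\mathcal{A}$. $x\circ y=xy+yx$. $\operatorname{JCent}(\mathcal{A})$: linear $f:\mathcal{A}\to\mathcal{A}$ with $f(x\circ y)=f(x)\circ y$ for all $x,y$. $\operatorname{Cent}(\mathcal{A})$: linear $f$ with $f(xy)=f(x)y=xf(y)$ for all $x,y$. *)

From HB Require Import structures.
From mathcomp Require Import all_boot all_order all_algebra.
Set Implicit Arguments. Unset Strict Implicit. Unset Printing Implicit Defensive.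
Import GRing.Theory.
Local Open Scope ring_scope.

Definition jprod (F : fieldType) (A : algType F) (x y : A) : A := x * y + y * x.

Definition idempotent_el (F : fieldType) (A : algType F) (e : A) : Prop := e * e = e.

Definition subalg_pred (F : fieldType) (A : algType F) (S : A -> Prop) : Prop :=
  [/\ S 0, S 1,
      (forall x y, S x -> S y -> S (x + y)),
      (forall (a : F) x, S x -> S (a *: x)) &
      (forall x y, S x -> S y -> S (x * y))].

Definition in_R (F : fieldType) (A : algType F) (x : A) : Prop :=
  forall S : A -> Prop, subalg_pred S ->
    (forall e : A, idempotent_el e -> S e) -> S x.

Definition in_JCent (F : fieldType) (A : algType F) (f : {linear A -> A}) : Prop :=
  forall x y : A, f (jprod x y) = jprod (f x) y.

Definition in_Cent (F : fieldType) (A : algType F) (f : {linear A -> A}) : Prop :=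
  forall x y : A, f (x * y) = f x * y /\ f (x * y) = x * f y.

From HB Require Import structures.
From mathcomp Require Import all_boot all_order all_algebra.
Set Implicit Arguments. Unset Strict Implicit. Unset Printing Implicit Defensive.
Import GRing.Theory.
Local Open Scope ring_scope.

(* Let f be in JCent(A) and a := f(1).  Evaluating the defining identity at
   (1, y) gives 2 f(y) = a y + y a.  At (e, e) for an idempotent e it gives
   2 f(e) = f(e) e + e f(e); multiplying by e on either side shows that f(e)
   commutes with e, and comparing e (2 f(e)) with (2 f(e)) e then shows that
   a commutes with e.  The centralizer of a is a subalgebra, so a is central
   in R(A) = A, whence 2 f(y) = 2 a y; as char F <> 2, f is left
   multiplication by a central element, i.e. f is in Cent(A). *)

Lemma mulrn2_eq0 (F : fieldType) (V : lmodType F) (v : V) :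
  (2%:R : F) != 0 -> v *+ 2 = 0 -> v = 0.
Proof.
move=> two_neq0 v2_eq0; apply/eqP.
have : (2%:R : F) *: v == 0 by rewrite scaler_nat v2_eq0.
by rewrite scaler_eq0 (negbTE two_neq0).
Qed.

Section JordanCentroid.

Variables (F : fieldType) (A : algType F).

Lemma Cent_JCent (f : {linear A -> A}) : in_Cent f -> in_JCent f.
Proof.
move=> fC x y; rewrite /jprod linearD.
by have [-> _] := fC x y; have [_ ->] := fC y x.
Qed.

Lemma subalg_comm (a : A) : subalg_pred (GRing.comm a).
Proof.
split; [exact: commr0 | exact: commr1 | exact: commrD | | exact: commrM].
by move=> c x ax; rewrite /GRing.comm -scalerAr -scalerAl ax.
Qed.

Lemma in_R_comm (a x : A) :
  (forall e, idempotent_el e -> GRing.comm a e) -> in_R x -> GRing.comm a x.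
Proof. by move=> a_idem; apply; [exact: subalg_comm | exact: a_idem]. Qed.

Section JCent.

Variable f : {linear A -> A}.
Hypothesis fJ : in_JCent f.

Lemma JCent_double (y : A) : f y *+ 2 = jprod (f 1) y.
Proof. by rewrite -fJ /jprod mul1r mulr1 linearD. Qed.

Lemma JCent_comm_idem (e : A) : idempotent_el e -> GRing.comm e (f e).
Proof.
rewrite /idempotent_el => ee; have fe2 : f e * e + e * f e = f e + f e.
  by have := fJ e e; rewrite /jprod ee linearD.
have efe_l : e * f e * e = e * f e.
  by have := congr1 (GRing.mul e) fe2; rewrite !mulrDr !mulrA ee => /addIr.
have efe_r : e * f e * e = f e * e.
  by have := congr1 (GRing.mul^~ e) fe2; rewrite !mulrDl -!mulrA ee => /addrI.
by rewrite /GRing.comm -efe_l efe_r.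
Qed.

Lemma JCent_comm1_idem (e : A) : idempotent_el e -> GRing.comm (f 1) e.
Proof.
rewrite /idempotent_el => ee; have := commrMn 2 (JCent_comm_idem ee).
rewrite /GRing.comm JCent_double /jprod mulrDr mulrDl !mulrA ee -!mulrA ee.
by rewrite [in X in X -> _]addrC => /addIr ->.
Qed.

Lemma JCent_central_mull (y : A) :
  (2%:R : F) != 0 -> (forall x, GRing.comm (f 1) x) -> f y = f 1 * y.
Proof.
move=> two_neq0 f1_central; apply/eqP; rewrite -subr_eq0; apply/eqP.
apply: (mulrn2_eq0 two_neq0).
by rewrite mulrnBl JCent_double /jprod f1_central mulr2n subrr.
Qed.

End JCent.

End JordanCentroid.

Theorem proposition3p6 (F : fieldType) (A : algType F)
  (hchar : (2%:R : F) != 0)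
  (hgen : forall x : A, in_R x) :
  forall f : {linear A -> A}, in_JCent f <-> in_Cent f.
Proof.
move=> f; split; last exact: Cent_JCent.
move=> fJ.
have f1_central x : GRing.comm (f 1) x.
  exact: in_R_comm (JCent_comm1_idem fJ) (hgen x).
have fE y : f y = f 1 * y := JCent_central_mull fJ y hchar f1_central.
by move=> x y; rewrite fE (fE x) (fE y) mulrA; split; rewrite // f1_central -mulrA.
Qed.
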